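(* Let $\mathfrak{g}$ be a connected soluble ranked Lie ring such that $\mathfrak{g}'$ is nilpotent. Then the Frattini subring $\Phi(\mathfrak{g})$ is an ideal of $\mathfrak{g}$.
   Context: A ranked Lie ring is a Lie ring definable in a structure of finite Morley rank; connected means no proper definable subgroup of finite index. The Frattini subring $\Phi(\mathfrak{g})$ of a connected ranked Lie ring $\mathfrak{g}$ is the intersection of all proper definable connected subrings of $\mathfrak{g}$ that are maximal among proper definable connected subrings. *)

(* Lie rings on a zmodType; "ranked" via the Borovik-Poizat
   rank axioms on the definable sets of the (induced) structure. *)
From HB Require Import structures.
From mathcomp Require Import all_boot all_order all_algebra.
Set Implicit Arguments. Unset Strict Implicit. Unset Printing Implicit Defensive.
Import GRing.Theory.
Local Open Scope ring_scope.

Section LieDefs.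
Variable V : zmodType.
Variable br : V -> V -> V.

Definition lie_ring : Prop :=
  [/\ forall x y z, br (x + y) z = br x z + br y z,
      forall x y z, br x (y + z) = br x y + br x z,
      forall x, br x x = 0 &
      forall x y z, br x (br y z) + br y (br z x) + br z (br x y) = 0].

Definition subgrp (H : V -> Prop) : Prop :=
  H 0 /\ forall x y, H x -> H y -> H (x - y).

Definition subring (H : V -> Prop) : Prop :=
  subgrp H /\ forall x y, H x -> H y -> H (br x y).

Definition ideal (H : V -> Prop) : Prop :=
  subgrp H /\ forall x y, H y -> H (br x y).

Definition bracket_span (A B : V -> Prop) : V -> Prop :=
  fun z => forall K, subgrp K -> (forall a b, A a -> B b -> K (br a b)) -> K z.

Fixpoint derived (n : nat) : V -> Prop :=
  match n with
  | 0 => fun _ => True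
  | n'.+1 => bracket_span (derived n') (derived n')
  end.

Definition soluble : Prop := exists n, forall x, derived n x -> x = 0.

(* lower central series of a sub-Lie-ring H: gamma_1 = H, gamma_{n+1} = [H, gamma_n] *)
Fixpoint lcs (H : V -> Prop) (n : nat) : V -> Prop :=
  match n with
  | 0 => H
  | n'.+1 => bracket_span H (lcs H n')
  end.

Definition nilpotent (H : V -> Prop) : Prop := exists n, forall x, lcs H n x -> x = 0.

Definition finite_index (K H : V -> Prop) : Prop :=
  exists s : seq V, forall x, H x -> exists a, a \in s /\ K (x - a).

End LieDefs.

(* A definable set of arity k is a predicate on seq V all of whose members
   have size k. *)
Record ranked_structure (V : zmodType) (br : V -> V -> V) := RankedStructure {
  Def : nat -> (seq V -> Prop) -> Prop;
  rk : (seq V -> Prop) -> nat;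
  Def_size : forall k A s, Def k A -> A s -> size s = k;
  Def_ext : forall k (A B : seq V -> Prop), Def k A -> (forall s, A s <-> B s) -> Def k B;
  Def_full : forall k, Def k (fun s => size s = k);
  Def_inter : forall k A B, Def k A -> Def k B -> Def k (fun s => A s /\ B s);
  Def_compl : forall k A, Def k A -> Def k (fun s => size s = k /\ ~ A s);
  Def_prod : forall k m A B, Def k A -> Def m B ->
     Def (k + m) (fun s => size s = (k + m)%N /\ A (take k s) /\ B (drop k s));
  Def_proj : forall k m A, Def (k + m) A ->
     Def k (fun s => size s = k /\ exists t, A (s ++ t));
  Def_reindex : forall n m (f : 'I_n -> 'I_m) A, Def n A ->
     Def m (fun s => size s = m /\ A [seq nth 0 s (f i) | i <- enum 'I_n]);
  Def_eq : Def 2 (fun s => exists x, s = [:: x; x]);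
  Def_const : forall a : V, Def 1 (fun s => s = [:: a]);
  Def_add : Def 3 (fun s => exists x y, s = [:: x; y; x + y]);
  Def_br : Def 3 (fun s => exists x y, s = [:: x; y; br x y]);
  (* Borovik-Poizat rank axioms (rank of nonempty definable sets) *)
  rk_mono : forall k A n, Def k A -> (exists s, A s) ->
     ((n < rk A)%N <->
      exists B : nat -> seq V -> Prop,
        (forall i, [/\ Def k (B i), exists s, B i s,
                       forall s, B i s -> A s & (n <= rk (B i))%N]) /\
        (forall i j s, i <> j -> B i s -> B j s -> False));
  rk_definable : forall k m D n, Def (k + m) D ->
     Def k (fun b => [/\ size b = k, exists c, D (b ++ c) & rk (fun c => D (b ++ c)) = n]);
  rk_unif_finite : forall k m D, Def (k + m) D ->
     exists N : nat, forall b, size b = k ->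
       (exists s : seq (seq V), forall c, D (b ++ c) -> c \in s) ->
       exists s : seq (seq V), (size s <= N)%N /\ forall c, D (b ++ c) -> c \in s;
  rk_add : forall k m A G n, Def k A -> Def (k + m) G ->
     (forall a, size a = k -> A a -> exists c, G (a ++ c)) ->
     (forall a c, size a = k -> G (a ++ c) -> A a) ->
     (forall a c c', size a = k -> G (a ++ c) -> G (a ++ c') -> c = c') ->
     (forall c, size c = m -> (exists a, size a = k /\ G (a ++ c)) ->
        rk (fun a => size a = k /\ G (a ++ c)) = n) ->
     (exists a, A a) ->
     rk A = (rk (fun c => size c = m /\ exists a, size a = k /\ G (a ++ c)) + n)%N
}.

Section Ranked.
Variable V : zmodType.
Variable br : V -> V -> V.
Variable D : ranked_structure br.

Definition definable (H : V -> Prop) : Prop :=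
  Def D 1 (fun s => exists x, s = [:: x] /\ H x).

Definition connected (H : V -> Prop) : Prop :=
  forall K, definable K -> subgrp K -> (forall x, K x -> H x) ->
    finite_index K H -> forall x, H x -> K x.

Definition def_conn_subring (H : V -> Prop) : Prop :=
  [/\ definable H, subring br H & connected H].

Definition proper (H : V -> Prop) : Prop := exists y, ~ H y.

Definition maximal_def_conn (M : V -> Prop) : Prop :=
  [/\ def_conn_subring M, proper M &
      forall N, def_conn_subring N -> proper N -> (forall x, M x -> N x) ->
        forall x, N x -> M x].

Definition frattini : V -> Prop :=
  fun x => forall M, maximal_def_conn M -> M x.

End Ranked.

(* Let M be a maximal definable connected subring. If g' <= M then
   [g, Phi] <= g' <= M. Otherwise let T be the last term of the lower central
   series of g' not contained in M; then M + T = g, and I = M /\ g' is an ideal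
   of g containing [g', g'] on which every ad a, a in g', is nilpotent. Hence
   for a in g' the map 1 + ad a induces an automorphism, modulo I, of the
   lattice of definable connected subrings containing I, with inverse
   1 - ad a; in particular M_a = (1 + ad a)(M) is again maximal. Writing
   x = m + a with m in M and a in T, any y in Phi lies in M and in M_a, and
   this forces [x, y] in M.
   Definability and connectedness of g' and of its lower central series come
   from Zilber's indecomposability argument: [A, B] is a finite sum of the
   connected groups [a, B], a in A, when B is definable and connected. *)

From Pilot Require Import Defs.
From mathcomp Require Import all_boot all_order all_algebra.
From Stdlib Require Import Classical ClassicalEpsilon FunctionalExtensionality PropExtensionality.
Set Implicit Arguments. Unset Strict Implicit. Unset Printing Implicit Defensive.
Import GRing.Theory.
Local Open Scope ring_scope.

Section Subgroups.
Variable V : zmodType.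
Implicit Types (A B H : V -> Prop) (x y : V).

Lemma subgrp0 H : subgrp H -> H 0. Proof. by case. Qed.

Lemma subgrpB H x y : subgrp H -> H x -> H y -> H (x - y).
Proof. by case=> _; apply. Qed.

Lemma subgrpN H x : subgrp H -> H x -> H (- x).
Proof. by move=> sH hx; rewrite -sub0r; apply: subgrpB => //; apply: subgrp0. Qed.

Lemma subgrpD H x y : subgrp H -> H x -> H y -> H (x + y).
Proof. by move=> sH hx hy; rewrite -(opprK y); apply: subgrpB => //; apply: subgrpN. Qed.

Lemma subgrpT : subgrp (fun _ : V => True). Proof. by []. Qed.

Lemma subgrpI A B : subgrp A -> subgrp B -> subgrp (fun x => A x /\ B x).
Proof.
by move=> sA sB; split; [split; apply: subgrp0 | move=> x y [? ?] [? ?]; split; apply: subgrpB].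
Qed.

Definition sumset A B : V -> Prop := fun v => exists a b, [/\ A a, B b & v = a + b].

Lemma subgrp_sumset A B : subgrp A -> subgrp B -> subgrp (sumset A B).
Proof.
move=> sA sB; split; first by exists 0, 0; rewrite addr0; split => //; apply: subgrp0.
move=> _ _ [a [b [ha hb ->]]] [a' [b' [ha' hb' ->]]].
by exists (a - a'), (b - b'); rewrite opprD addrACA; split => //; apply: subgrpB.
Qed.

Lemma sumsetl A B x : subgrp B -> A x -> sumset A B x.
Proof. by move=> sB hx; exists x, 0; rewrite addr0; split => //; apply: subgrp0. Qed.

Lemma sumsetr A B x : subgrp A -> B x -> sumset A B x.
Proof. by move=> sA hx; exists 0, x; rewrite add0r; split => //; apply: subgrp0. Qed.

Lemma infinite_index_seq A B : ~ finite_index A B ->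
  exists a : nat -> V, (forall i, B (a i)) /\ forall i j, (j < i)%N -> ~ A (a i - a j).
Proof.
move=> hfi.
pose Fresh (s : seq V) x := B x /\ forall b, b \in s -> ~ A (x - b).
have exFresh s : exists x, Fresh s x.
  apply: NNPP => hno; apply: hfi; exists s => x hx.
  apply: NNPP => hx'; apply: hno; exists x; split => // b hb hA.
  by apply: hx'; exists b.
pose fresh s := epsilon (inhabits 0) (Fresh s).
have freshP s : Fresh s (fresh s) := epsilon_spec (inhabits 0) (Fresh s) (exFresh s).
pose prefix n := iter n (fun s => rcons s (fresh s)) [::].
have prefixP i j : (j < i)%N -> fresh (prefix j) \in prefix i.
  elim: i => // i IHi; rewrite ltnS leq_eqVlt => /orP [/eqP -> | /IHi hj].
    by rewrite /= mem_rcons mem_head.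
  by rewrite /= mem_rcons in_cons hj orbT.
exists (fun i => fresh (prefix i)); split=> [i | i j /prefixP]; first exact: (freshP _).1.
exact: (freshP _).2.
Qed.

Definition additive (f : V -> V) := forall x y, f (x - y) = f x - f y.

Lemma additive0 f : additive f -> f 0 = 0.
Proof. by move=> hf; have := hf 0 0; rewrite !subrr. Qed.

Definition fimage (f : V -> V) A : V -> Prop := fun y => exists a, A a /\ y = f a.

Lemma subgrp_fimage f A : additive f -> subgrp A -> subgrp (fimage f A).
Proof.
move=> hf sA; split; first by exists 0; rewrite additive0 //; split => //; apply: subgrp0.
by move=> _ _ [a [ha ->]] [b [hb ->]]; exists (a - b); rewrite hf; split => //; apply: subgrpB.
Qed.

Lemma subgrp_preimage f A K : additive f -> subgrp A -> subgrp K ->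
  subgrp (fun a => A a /\ K (f a)).
Proof.
move=> hf sA sK; split; first by rewrite additive0 //; split; apply: subgrp0.
by move=> x y [? ?] [? ?]; rewrite hf; split; apply: subgrpB.
Qed.

Lemma finite_index_preimage f A K H : additive f -> subgrp A -> subgrp K ->
  (forall a, A a -> H (f a)) -> finite_index K H ->
  finite_index (fun a => A a /\ K (f a)) A.
Proof.
move=> hf sA sK hAH [s hs].
pose lift r := epsilon (inhabits 0) (fun a => A a /\ K (f a - r)).
exists (map lift s) => a ha.
have [r [hr hK]] := hs _ (hAH _ ha).
have [hl1 hl2] : A (lift r) /\ K (f (lift r) - r).
  by apply: (epsilon_spec (inhabits 0) (fun a => A a /\ K (f a - r))); exists a.
exists (lift r); split; first exact: map_f.
split; first exact: subgrpB.
have -> : f (a - lift r) = (f a - r) - (f (lift r) - r).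
  by rewrite hf opprB addrC addrA subrK addrC.
exact: subgrpB.
Qed.

End Subgroups.

Section LieRing.
Variables (V : zmodType) (br : V -> V -> V).
Hypothesis hL : lie_ring br.
Implicit Types (A B H : V -> Prop) (x y z : V).

Lemma brDl x y z : br (x + y) z = br x z + br y z. Proof. by case: hL. Qed.
Lemma brDr x y z : br x (y + z) = br x y + br x z. Proof. by case: hL. Qed.

Lemma br0l x : br 0 x = 0.
Proof. by apply: (addrI (br 0 x)); rewrite addr0 -brDl addr0. Qed.

Lemma br0r x : br x 0 = 0.
Proof. by apply: (addrI (br x 0)); rewrite addr0 -brDr addr0. Qed.

Lemma brNl x y : br (- x) y = - br x y.
Proof. by apply: (addrI (br x y)); rewrite -brDl !subrr br0l. Qed.

Lemma brNr x y : br x (- y) = - br x y.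
Proof. by apply: (addrI (br x y)); rewrite -brDr !subrr br0r. Qed.

Lemma brBr x y z : br x (y - z) = br x y - br x z. Proof. by rewrite brDr brNr. Qed.

Lemma brC x y : br x y = - br y x.
Proof.
have [_ _ brxx _] := hL.
have /eqP := brxx (x + y); rewrite brDl !brDr !brxx add0r addr0 addr_eq0.
by move/eqP.
Qed.

Lemma br_leibniz x y z : br x (br y z) = br (br x y) z + br y (br x z).
Proof.
have [_ _ _ jacobi] := hL.
have /eqP := jacobi x y z; rewrite -addrA addr_eq0 => /eqP ->.
by rewrite (brC z x) brNr (brC z (br x y)) -opprD opprK addrC.
Qed.

Lemma additive_br x : additive (br x).
Proof. by move=> y z; rewrite brBr. Qed.

(* [tw a] is 1 + ad a, the exponential of ad a truncated at degree one. *)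
Definition tw a v := v + br a v.

Lemma additive_tw a : additive (tw a).
Proof. by move=> x y; rewrite /tw brBr opprD addrACA. Qed.

Lemma subgrp_bracket_span A B : subgrp (bracket_span br A B).
Proof.
split; first by move=> K sK _; apply: subgrp0.
by move=> x y hx hy K sK hK; apply: subgrpB => //; [apply: hx | apply: hy].
Qed.

Lemma bracket_span_br A B a b : A a -> B b -> bracket_span br A B (br a b).
Proof. by move=> ha hb K _; apply. Qed.

Lemma bracket_span_ideal A B : (forall x a, A a -> A (br x a)) ->
  (forall x b, B b -> B (br x b)) ->
  forall x z, bracket_span br A B z -> bracket_span br A B (br x z).
Proof.
move=> hA hB x z hz; have sS := subgrp_bracket_span A B; move: x.
apply: (hz (fun z => forall x, bracket_span br A B (br x z))).
- split=> [x | u v hu hv x]; first by rewrite br0r; apply: subgrp0.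
  by rewrite brBr; apply: (subgrpB sS).
- move=> a b ha hb x; rewrite br_leibniz.
  by apply: (subgrpD sS); apply: bracket_span_br; auto.
Qed.

End LieRing.

Section Formulas.
Variables (V : zmodType) (br : V -> V -> V) (D : ranked_structure br).

Definition DefP k (P : seq V -> Prop) := Def D k (fun s => size s = k /\ P s).

Lemma DefP_ext k P Q : DefP k P -> (forall s, size s = k -> (P s <-> Q s)) -> DefP k Q.
Proof. by move=> hP e; apply: (Def_ext hP) => s; split=> -[hs /(e _ hs)]. Qed.

Lemma DefP_reindex n (idx : seq nat) m A : size idx = n -> all (fun i => (i < m)%N) idx ->
  Def D n A -> DefP m (fun s => A (map (nth 0 s) idx)).
Proof.
move=> sz hall hA.
case: m hall => [|m] hall.
  case: idx sz hall => [|i idx] //= sz _; subst n.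
  by have := Def_reindex (fun i : 'I_0 => i) hA; rewrite enum_ord0.
pose f (i : 'I_n) : 'I_m.+1 := inord (nth 0%N idx i).
suff E (s : seq V) : [seq nth 0 s (f i) | i <- enum 'I_n] = map (nth 0 s) idx.
  by apply: (Def_ext (Def_reindex f hA)) => s; rewrite E.
rewrite -(mkseq_nth 0%N idx) /mkseq sz -map_comp -val_enum_ord -map_comp.
apply: eq_map => i /=; rewrite inordK //.
by apply: (allP hall); apply: mem_nth; rewrite sz.
Qed.

(* First-order formulas over the Lie ring with parameters; variables are de
   Bruijn levels: [FEx f] binds a new last variable. *)
Inductive formula : Type :=
| FAdd of nat & nat & nat
| FBr of nat & nat & nat
| FEq of nat & nat
| FCst of nat & V
| FIn of (V -> Prop) & nat
| FAnd of formula & formula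
| FNot of formula
| FEx of formula.

Fixpoint holds (s : seq V) (f : formula) : Prop :=
  match f with
  | FAdd i j l => nth 0 s l = nth 0 s i + nth 0 s j
  | FBr i j l => nth 0 s l = br (nth 0 s i) (nth 0 s j)
  | FEq i j => nth 0 s i = nth 0 s j
  | FCst i c => nth 0 s i = c
  | FIn H i => H (nth 0 s i)
  | FAnd f g => holds s f /\ holds s g
  | FNot f => ~ holds s f
  | FEx f => exists y, holds (rcons s y) f
  end.

Fixpoint wf_formula (k : nat) (f : formula) : Prop :=
  match f with
  | FAdd i j l | FBr i j l => [/\ (i < k)%N, (j < k)%N & (l < k)%N]
  | FEq i j => (i < k)%N /\ (j < k)%N
  | FCst i _ => (i < k)%N
  | FIn H i => (i < k)%N /\ definable D H
  | FAnd f g => wf_formula k f /\ wf_formula k g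
  | FNot f => wf_formula k f
  | FEx f => wf_formula k.+1 f
  end.

Lemma DefP_formula f k : wf_formula k f -> DefP k (fun s => holds s f).
Proof.
elim: f k => [i j l|i j l|i j|i c|H i|f IHf g IHg|f IHf|f IHf] k /=.
- case=> hi hj hl.
  apply: (DefP_ext (@DefP_reindex 3 [:: i; j; l] k _ erefl _ (Def_add D))) => [|s _ /=].
    by rewrite /= hi hj hl.
  by split=> [[x [y [-> -> ->]]] | ->] //; exists (nth 0 s i), (nth 0 s j).
- case=> hi hj hl.
  apply: (DefP_ext (@DefP_reindex 3 [:: i; j; l] k _ erefl _ (Def_br D))) => [|s _ /=].
    by rewrite /= hi hj hl.
  by split=> [[x [y [-> -> ->]]] | ->] //; exists (nth 0 s i), (nth 0 s j).
- case=> hi hj.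
  apply: (DefP_ext (@DefP_reindex 2 [:: i; j] k _ erefl _ (Def_eq D))) => [|s _ /=].
    by rewrite /= hi hj.
  by split=> [[x [-> ->]] | ->] //; exists (nth 0 s j).
- move=> hi.
  apply: (DefP_ext (@DefP_reindex 1 [:: i] k _ erefl _ (Def_const D c))) => [|s _ /=].
    by rewrite /= hi.
  by split=> [[->] | ->].
- case=> hi hH.
  apply: (DefP_ext (@DefP_reindex 1 [:: i] k _ erefl _ hH)) => [|s _ /=].
    by rewrite /= hi.
  by split=> [[x [[->]]] | hx] //; exists (nth 0 s i).
- case=> /IHf hf /IHg hg.
  by apply: (Def_ext (Def_inter hf hg)) => s; split=> [[[? ?] [_ ?]] | [? [? ?]]].
- move=> /IHf /Def_compl hf.
  by apply: (Def_ext hf) => s; split=> -[hs hn]; split=> // hp; apply: hn; [split | case: hp].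
- move=> /IHf; rewrite /DefP -addn1 => /Def_proj hf.
  apply: (Def_ext hf) => s; split.
  + case=> hs [t [hst hsat]]; split => //.
    rewrite size_cat hs in hst.
    have : size t = 1%N by apply/eqP; rewrite -(eqn_add2l k) hst.
    case: t {hst} hsat => [|y [|]] //= hsat _.
    by exists y; rewrite -cats1.
  + case=> hs [y hy]; split => //; exists [:: y].
    by rewrite cats1 size_rcons hs addn1.
Qed.

Lemma definable_formula (H : V -> Prop) f : wf_formula 1 f ->
  (forall x, holds [:: x] f <-> H x) -> definable D H.
Proof.
move=> /DefP_formula hf he; apply: (Def_ext hf) => s; split.
- case=> hs hx; case: s hs hx => [|x [|]] //= _ hx.
  by exists x; split => //; apply/he.
- by case=> x [-> hx]; split => //; apply/he.
Qed.

Lemma definableT : definable D (fun _ => True).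
Proof. exact: (@definable_formula _ (FEq 0 0)). Qed.

Lemma definable0 : definable D (fun x => x = 0).
Proof. exact: (@definable_formula _ (FCst 0 0)). Qed.

Lemma definableI (A B : V -> Prop) : definable D A -> definable D B ->
  definable D (fun x => A x /\ B x).
Proof. by move=> hA hB; apply: (@definable_formula _ (FAnd (FIn A 0) (FIn B 0))). Qed.

Lemma definable_translate (A : V -> Prop) a : definable D A -> definable D (fun x => A (x - a)).
Proof.
move=> hA; apply: (@definable_formula _
  (FEx (FEx (FAnd (FIn A 1) (FAnd (FCst 2 a) (FAdd 1 2 0)))))) => //= x.
split=> [[y [z [hy [-> ->]]]] | hx]; first by rewrite addrK.
by exists (x - a), a; rewrite subrK.
Qed.

Lemma definable_sumset (A B : V -> Prop) : definable D A -> definable D B ->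
  definable D (sumset A B).
Proof.
move=> hA hB; apply: (@definable_formula _
  (FEx (FEx (FAnd (FIn A 1) (FAnd (FIn B 2) (FAdd 1 2 0)))))) => //= x.
by split=> [[y [z [hy [hz ->]]]] | [y [z [hy hz ->]]]]; exists y, z.
Qed.

Lemma definable_fimage_br a (B : V -> Prop) : definable D B -> definable D (fimage (br a) B).
Proof.
move=> hB; apply: (@definable_formula _
  (FEx (FEx (FAnd (FIn B 1) (FAnd (FCst 2 a) (FBr 2 1 0)))))) => //= x.
by split=> [[y [z [hy [-> ->]]]] | [y [hy ->]]]; [exists y | exists y, a].
Qed.

Lemma definable_preimage_br a (B K : V -> Prop) : definable D B -> definable D K ->
  definable D (fun b => B b /\ K (br a b)).
Proof.
move=> hB hK; apply: (@definable_formula _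
  (FEx (FEx (FAnd (FIn B 0) (FAnd (FCst 1 a) (FAnd (FBr 1 0 2) (FIn K 2))))))) => //= x.
by split=> [[y [z [hx [-> [-> ?]]]]] | [hx hk]] //; exists a, (br a x).
Qed.

Lemma definable_fimage_tw a (H : V -> Prop) : definable D H -> definable D (fimage (tw br a) H).
Proof.
move=> hH; apply: (@definable_formula _ (FEx (FEx (FEx (FAnd (FIn H 1)
  (FAnd (FCst 2 a) (FAnd (FBr 2 1 3) (FAdd 1 3 0)))))))) => //= x.
by split=> [[h [c [w [hh [-> [-> ->]]]]]] | [h [hh ->]]]; [exists h | exists h, a, (br a h)].
Qed.

Lemma definable_preimage_tw a (H K : V -> Prop) : definable D H -> definable D K ->
  definable D (fun h => H h /\ K (tw br a h)).
Proof.
move=> hH hK; apply: (@definable_formula _ (FEx (FEx (FEx (FAnd (FIn H 0)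
  (FAnd (FCst 1 a) (FAnd (FBr 1 0 2) (FAnd (FAdd 0 2 3) (FIn K 3))))))))) => //= x.
by split=> [[c [u [w [hx [-> [-> [-> ?]]]]]]] | [hx hk]] //; exists a, (br a x), (x + br a x).
Qed.

End Formulas.

Section Rank.
Variables (V : zmodType) (br : V -> V -> V) (D : ranked_structure br).
Implicit Types (A B H K : V -> Prop).

Definition unary H : seq V -> Prop := fun s => exists x, s = [:: x] /\ H x.

Definition rank H := rk D (unary H).

Lemma unary_eta C : Def D 1 C -> C = unary (fun x => C [:: x]).
Proof.
move=> hC; apply: functional_extensionality => s; apply: propositional_extensionality.
split=> [hs | [x [-> //]]].
by have := Def_size hC hs; case: s hs => [|x [|]] //= hs _; exists x.
Qed.

Lemma rank_le A B : definable D A -> definable D B -> (forall x, A x -> B x) ->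
  (exists x, A x) -> (rank A <= rank B)%N.
Proof.
move=> hA hB hAB [x0 hx0]; rewrite /rank.
case E: (rk D (unary A)) => [|n] //.
have neA : exists s, unary A s by exists [:: x0], x0.
have neB : exists s, unary B s by exists [:: x0], x0; split => //; apply: hAB.
have := proj1 (rk_mono n hA neA); rewrite E ltnSn => /(_ isT) [Bf [hBf disj]].
apply: (proj2 (rk_mono n hB neB)); exists Bf; split => // i.
case: (hBf i) => ? ? hsub ?; split => // s /hsub [y [-> hy]].
by exists y; split => //; apply: hAB.
Qed.

Lemma rank_translate n A (a : V) : definable D A -> (exists x, A x) ->
  (n <= rank A)%N -> (n <= rank (fun x => A (x - a)%R))%N.
Proof.
elim: n A => // n IH A hA [x0 hx0] hn.
have neA : exists s, unary A s by exists [:: x0], x0.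
have neAa : exists s, unary (fun x => A (x - a)) s.
  by exists [:: x0 + a], (x0 + a); rewrite addrK.
have [Bf [hBf disj]] := proj1 (rk_mono n hA neA) hn.
apply: (proj2 (rk_mono n (definable_translate a hA) neAa)).
exists (fun i => unary (fun x => Bf i [:: x - a])); split.
- move=> i; case: (hBf i) => dB [s hs] hsub hr.
  have E := unary_eta dB; rewrite E in dB hr hs.
  case: hs => y [_ hy]; split.
  + exact: (definable_translate a dB).
  + by exists [:: y + a], (y + a); rewrite addrK.
  + move=> _ [x [-> hx]]; exists x; split => //.
    have : unary A [:: x - a] by apply: hsub; rewrite E; exists (x - a).
    by case=> z [[->]].
  + by apply: (IH (fun x => Bf i [:: x])) => //; exists y.
- move=> i j s hij [x [-> hx]] [x' [[<-] hx']].
  exact: (disj i j [:: x - a]).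
Qed.

(* The infinitely many cosets of A in B are disjoint translates of A, so
   [rk_mono] gives rank A < rank B. *)
Lemma rank_lt A B : definable D A -> definable D B -> subgrp A -> subgrp B ->
  (forall x, A x -> B x) -> ~ finite_index A B -> (rank A < rank B)%N.
Proof.
move=> dA dB sA sB hAB /infinite_index_seq [a [aB a_sep]].
have neB : exists s, unary B s by exists [:: 0], 0; split => //; apply: subgrp0.
apply: (proj2 (rk_mono (rank A) dB neB)).
exists (fun i => unary (fun x => A (x - a i))); split.
- move=> i; split.
  + exact: (definable_translate (a i) dA).
  + by exists [:: a i], (a i); rewrite subrr; split => //; apply: subgrp0.
  + move=> _ [x [-> hx]]; exists x; split => //.
    by rewrite -(subrK (a i) x); apply: subgrpD => //; apply: hAB.
  + by apply: rank_translate => //; exists 0; apply: subgrp0.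
- have coset_eq i j x : A (x - a i) -> A (x - a j) -> A (a j - a i).
    have -> : a j - a i = (x - a i) - (x - a j) by rewrite opprB [RHS]addrC addrA subrK.
    exact: subgrpB.
  move=> i j _ hij [x [-> hx]] [_ [[<-] hx']].
  case: (ltngtP i j) => [hc | hc | hc] //.
  + exact: (a_sep _ _ hc (coset_eq _ _ _ hx hx')).
  + exact: (a_sep _ _ hc (coset_eq _ _ _ hx' hx)).
Qed.

Lemma connected_rank_ge A B : definable D A -> definable D B -> subgrp A -> subgrp B ->
  connected D B -> (forall x, A x -> B x) -> (rank B <= rank A)%N -> forall x, B x -> A x.
Proof.
move=> dA dB sA sB cB hAB hr; apply: cB => //.
apply: NNPP => /(rank_lt dA dB sA sB hAB).
by rewrite ltnNge hr.
Qed.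

End Rank.

Section Connected.
Variables (V : zmodType) (br : V -> V -> V) (D : ranked_structure br).
Implicit Types (A B H K : V -> Prop).

Lemma connected_preimage_sub f A K H : additive f -> subgrp A -> connected D A ->
  subgrp K -> definable D (fun a => A a /\ K (f a)) ->
  (forall a, A a -> H (f a)) -> finite_index K H -> forall a, A a -> K (f a).
Proof.
move=> hf sA cA sK dP hAH hfi a ha.
by have [] := cA _ dP (subgrp_preimage hf sA sK) (fun x => @proj1 _ _)
  (finite_index_preimage hf sA sK hAH hfi) a ha.
Qed.

Lemma connected_fimage f A : additive f -> subgrp A -> connected D A ->
  (forall K, definable D K -> definable D (fun a => A a /\ K (f a))) ->
  connected D (fimage f A).
Proof.
move=> hf sA cA dpre K dK sK _ hfi _ [a [ha ->]].
by apply: (connected_preimage_sub hf sA cA sK (dpre _ dK) _ hfi ha) => a' ha'; exists a'.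
Qed.

Lemma connected_sumset A B : definable D A -> definable D B -> subgrp A -> subgrp B ->
  connected D A -> connected D B -> connected D (sumset A B).
Proof.
move=> dA dB sA sB cA cB K dK sK _ hfi _ [a [b [ha hb ->]]].
have hid : additive (@id V) by [].
apply: subgrpD => //.
- exact: (connected_preimage_sub hid sA cA sK (definableI dA dK) (fun _ => sumsetl sB) hfi ha).
- exact: (connected_preimage_sub hid sB cB sK (definableI dB dK) (fun _ => sumsetr sA) hfi hb).
Qed.

Lemma connected0 : connected D (fun x : V => x = 0).
Proof. by move=> K _ sK _ _ _ ->; apply: subgrp0. Qed.

End Connected.

Lemma ex_maxn_bounded (P : nat -> Prop) N : (exists n, P n) -> (forall n, P n -> (n <= N)%N) ->
  exists n, P n /\ forall m, P m -> (m <= n)%N.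
Proof.
elim: N => [|N IH] hex hb.
  by case: hex => n hn; exists n; split => // m /hb; rewrite leqn0 => /eqP ->.
case: (classic (P N.+1)) => [hN | hN]; first by exists N.+1.
apply: IH => // n hn; move: (hb _ hn); rewrite leq_eqVlt => /orP [/eqP e | //].
by rewrite e in hn.
Qed.

Section BracketSpan.
Variables (V : zmodType) (br : V -> V -> V) (D : ranked_structure br).
Hypothesis hL : lie_ring br.
Implicit Types (A B : V -> Prop) (s : seq V).

Definition bracket_sum B s : V -> Prop :=
  foldr (fun a S => sumset (fimage (br a) B) S) (fun x => x = 0) s.

Lemma definable_subgrp_connected_bracket_sum B s : definable D B -> subgrp B -> connected D B ->
  [/\ definable D (bracket_sum B s), subgrp (bracket_sum B s) & connected D (bracket_sum B s)].
Proof.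
move=> dB sB cB; elim: s => [|a s [dS sS cS]] /=.
  split; [exact: definable0 | | exact: connected0].
  by split=> // x y -> ->; rewrite subrr.
have dI : definable D (fimage (br a) B) by apply: definable_fimage_br.
have sI : subgrp (fimage (br a) B) by apply: subgrp_fimage => //; apply: additive_br.
have cI : connected D (fimage (br a) B).
  apply: connected_fimage => //; first exact: additive_br.
  by move=> K dK; apply: definable_preimage_br.
by split; [apply: definable_sumset | apply: subgrp_sumset | apply: connected_sumset].
Qed.

Lemma bracket_sum_sub_span A B s : (forall a, a \in s -> A a) ->
  forall v, bracket_sum B s v -> bracket_span br A B v.
Proof.
have sS := subgrp_bracket_span br A B.
elim: s => [|a s IH] hs v /=; first by move=> ->; apply: subgrp0.
case=> _ [w [[b [hb ->]] hw ->]].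
apply: (subgrpD sS); first by apply: bracket_span_br => //; apply: hs; rewrite mem_head.
by apply: IH => // x hx; apply: hs; rewrite in_cons hx orbT.
Qed.

(* A finite sum of groups [a, B] of maximal rank absorbs every further [a, B]. *)
Lemma bracket_span_definable_connected A B : definable D B -> subgrp B -> connected D B ->
  definable D (bracket_span br A B) /\ connected D (bracket_span br A B).
Proof.
move=> dB sB cB.
pose P n := exists s, (forall a, a \in s -> A a) /\ rank D (bracket_sum B s) = n.
have [n [[s0 [hs0 hr0]] hmax]] : exists n, P n /\ forall m, P m -> (m <= n)%N.
  apply: (@ex_maxn_bounded _ (rank D (fun _ => True))).
    by exists (rank D (bracket_sum B [::])), [::].
  move=> _ [s [_ <-]]; have [dS sS _] := definable_subgrp_connected_bracket_sum s dB sB cB.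
  by apply: rank_le => //; [exact: definableT | exists 0; apply: subgrp0].
have [dS0 sS0 cS0] := definable_subgrp_connected_bracket_sum s0 dB sB cB.
have absorb a b : A a -> B b -> bracket_sum B s0 (br a b).
  move=> ha hb; have [dS1 sS1 cS1] := definable_subgrp_connected_bracket_sum (a :: s0) dB sB cB.
  apply: (connected_rank_ge dS0 dS1 sS0 sS1 cS1).
  - by move=> v hv; apply: sumsetr => //; apply: subgrp_fimage => //; apply: additive_br.
  - rewrite hr0; apply: hmax; exists (a :: s0); split => // x.
    by rewrite in_cons => /orP [/eqP -> | /hs0].
  - by apply: sumsetl => //; exists b.
suff -> : bracket_span br A B = bracket_sum B s0 by split.
apply: functional_extensionality => v; apply: propositional_extensionality; split.
- by move=> hv; apply: hv => // a b; apply: absorb.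
- exact: bracket_sum_sub_span.
Qed.

End BracketSpan.

Section Twist.
Variables (V : zmodType) (br : V -> V -> V) (D : ranked_structure br).
Hypothesis hL : lie_ring br.
Variables N I : V -> Prop.
Hypothesis sN : subgrp N.
Hypothesis sI : subgrp I.
Hypothesis N_br : forall u v, N (br u v).
Hypothesis I_ideal : forall v z, I z -> I (br v z).
Hypothesis NN_I : forall u v, N u -> N v -> I (br u v).
Hypothesis ad_nil_I : forall a z, N a -> I z -> exists c, iter c (fun w => - br a w) z = 0.
Implicit Types (H K M : V -> Prop) (a : V).

Definition twist a H := fimage (tw br a) H.

Lemma subgrp_twist a H : subgrp H -> subgrp (twist a H).
Proof. by move=> sH; apply: subgrp_fimage => //; apply: (additive_tw hL). Qed.

Lemma twistS a H K : (forall x, H x -> K x) -> forall x, twist a H x -> twist a K x.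
Proof. by move=> hHK x [h [hh ->]]; exists h; split => //; apply: hHK. Qed.

(* Since ad a is nilpotent on I, z = sum_j tw a ((- ad a)^j z) lies in tw a I. *)
Lemma I_sub_twist a H : N a -> subgrp H -> (forall z, I z -> H z) ->
  forall z, I z -> twist a H z.
Proof.
move=> ha sH IH z hz; have [c hc] := ad_nil_I ha hz.
have sT := subgrp_twist a sH.
pose u j := iter j (fun w => - br a w) z.
suff hu j : I (u j) /\ twist a H (z - u j) by have [_] := hu c; rewrite /u hc subr0.
elim: j => [|j [hIu hTu]]; first by rewrite /u subrr; split => //; apply: subgrp0.
have -> : u j.+1 = - br a (u j) by [].
split; first by apply: subgrpN => //; apply: I_ideal.
rewrite opprK -(subrK (u j) z) -addrA; apply: subgrpD => //.
by exists (u j); split => //; apply: IH.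
Qed.

Lemma twist_subring a H : N a -> subring br H -> (forall z, I z -> H z) ->
  subring br (twist a H).
Proof.
move=> ha [sH rH] IH; split; first exact: subgrp_twist.
move=> _ _ [h1 [hh1 ->]] [h2 [hh2 ->]].
have -> : br (tw br a h1) (tw br a h2) = tw br a (br h1 h2) + br (br a h1) (br a h2).
  rewrite /tw (brDl hL) !(brDr hL) (br_leibniz hL a h1 h2) !addrA.
  by rewrite (addrAC (br h1 h2) (br h1 (br a h2))).
apply: subgrpD; [exact: subgrp_twist | by exists (br h1 h2); split => //; apply: rH |].
by apply: (I_sub_twist ha) => //; apply: NN_I.
Qed.

Lemma twist_inv a H : N a -> subgrp H -> (forall z, I z -> H z) ->
  twist (- a) (twist a H) = H.
Proof.
move=> ha sH IH; have aaI h : I (br a (br a h)) by apply: NN_I.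
have twK h : tw br (- a) (tw br a h) = h - br a (br a h).
  by rewrite /tw (brNl hL) (brDr hL) opprD addrA addrK.
apply: functional_extensionality => v; apply: propositional_extensionality; split.
- case=> _ [[h [hh ->]] ->]; rewrite twK.
  by apply: subgrpB => //; apply: IH.
- move=> hv; rewrite -(subrK (br a (br a v)) v) -twK.
  apply: subgrpD; first by apply: subgrp_twist; apply: subgrp_twist.
    by exists (tw br a v); split => //; exists v.
  apply: (I_sub_twist (subgrpN sN ha)); first exact: subgrp_twist.
    by move=> z hz; apply: (I_sub_twist ha).
  exact: aaI.
Qed.

Lemma twistT a : N a -> forall v, twist a (fun _ => True) v.
Proof.
move=> ha v.
have hna : N (- a) by apply: subgrpN.
have := twist_inv hna (@subgrpT V) (fun _ _ => Logic.I); rewrite opprK => E.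
by apply: (@twistS a (twist (- a) (fun _ => True))) => //; rewrite E.
Qed.

Lemma twist_def_conn_subring a M : N a -> def_conn_subring D M -> (forall z, I z -> M z) ->
  def_conn_subring D (twist a M).
Proof.
move=> ha [dM rM cM] IM; have [sM _] := rM.
split; [exact: definable_fimage_tw | exact: twist_subring |].
apply: connected_fimage => //; first exact: additive_tw.
by move=> K dK; apply: definable_preimage_tw.
Qed.

Lemma twist_proper a M : N a -> subgrp M -> (forall z, I z -> M z) -> Defs.proper M ->
  Defs.proper (twist a M).
Proof.
move=> ha sM IM [y hy]; apply: NNPP => hnp; apply: hy.
rewrite -(twist_inv ha sM IM); apply: (@twistS _ (fun _ => True)); last first.
  by apply: twistT; apply: subgrpN.
by move=> z _; apply: NNPP => hz; apply: hnp; exists z.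
Qed.

Lemma twist_maximal a M : N a -> maximal_def_conn D M -> (forall z, I z -> M z) ->
  maximal_def_conn D (twist a M).
Proof.
move=> ha [cM pM maxM] IM; have [_ [sM _] _] := cM.
split; [exact: twist_def_conn_subring | exact: twist_proper |].
move=> K cK pK MK; have [_ [sK _] _] := cK.
have hna : N (- a) by apply: subgrpN.
have IK z : I z -> K z by move=> hz; apply: MK; apply: I_sub_twist.
have KM : forall w, twist (- a) K w -> M w.
  apply: maxM; [exact: twist_def_conn_subring | exact: twist_proper |].
  by move=> w; rewrite -{1}(twist_inv ha sM IM); apply: twistS.
by move=> v; rewrite -{1}(twist_inv hna sK IK) opprK; apply: twistS.
Qed.

(* Writing x = m + t, the element y lies in both M and twist t M. *)
Lemma frattini_br_mem M x y : maximal_def_conn D M -> (forall z, I z -> M z) ->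
  (forall z, M z -> N z -> I z) -> (forall v, exists m t, [/\ M m, N t & v = m + t]) ->
  frattini D y -> M (br x y).
Proof.
move=> hM IM MN_I decomp hy; have [[_ [sM rM] _] _ _] := hM.
have [m [t [hm ht ->]]] := decomp x.
have [h [hh Ey]] := hy _ (twist_maximal ht hM IM).
have Eth : br t h = y - h by rewrite Ey /tw addrAC subrr add0r.
have yM : M y := hy M hM.
have yhI : I (y - h) by apply: MN_I; [exact: subgrpB | rewrite -Eth; apply: N_br].
rewrite (brDl hL); apply: subgrpD => //; first exact: rM.
rewrite -(subrK h y) (brDr hL); apply: subgrpD => //; apply: IM; first exact: I_ideal.
by rewrite Eth.
Qed.

End Twist.

Lemma ex_fail_succ_holds (P : nat -> Prop) n : P n -> ~ P 0 -> exists k, ~ P k /\ P k.+1.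
Proof.
elim: n => [|n IH] // hn h0.
by case: (classic (P n)) => [/IH | hn']; [apply | exists n].
Qed.

Section Frattini.
Variables (V : zmodType) (br : V -> V -> V) (D : ranked_structure br).
Hypothesis hL : lie_ring br.
Hypothesis connV : connected D (fun _ => True).
Implicit Types (M T : V -> Prop).

Let N := derived br 1.

Lemma subgrp_derived1 : subgrp N.
Proof. exact: subgrp_bracket_span. Qed.

Lemma derived1_br u v : N (br u v).
Proof. exact: bracket_span_br. Qed.

Lemma derived1_definable_connected : definable D N /\ connected D N.
Proof. exact: (bracket_span_definable_connected hL _ (definableT D) (subgrpT V) connV). Qed.

Lemma lcs_derived1 j :
  [/\ definable D (lcs br N j), connected D (lcs br N j), subgrp (lcs br N j),
      forall w, lcs br N j w -> N w & forall x w, lcs br N j w -> lcs br N j (br x w)].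
Proof.
elim: j => [|j [dj cj sj _ ideal_j]] /=.
  have [dN cN] := derived1_definable_connected.
  by split => //; [exact: subgrp_derived1 | move=> x w _; apply: derived1_br].
have [dj' cj'] := bracket_span_definable_connected hL N dj sj cj.
split => //; first exact: subgrp_bracket_span.
  by move=> w hw; apply: hw => [|a b _ _]; [exact: subgrp_derived1 | apply: derived1_br].
by apply: bracket_span_ideal => // x a _; apply: derived1_br.
Qed.

Lemma iter_ad_lcs a z j : N a -> N z -> lcs br N j (iter j (fun w => - br a w) z).
Proof.
move=> ha hz; elim: j => //= j IHj.
have [_ _ sj1 _ _] := lcs_derived1 j.+1.
by apply: subgrpN sj1 _; apply: bracket_span_br.
Qed.

Lemma maximal_sumset_full M T : maximal_def_conn D M ->
  definable D T -> subgrp T -> connected D T -> (forall x t, T t -> T (br x t)) ->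
  ~ (forall z, T z -> M z) -> forall v, sumset M T v.
Proof.
move=> [[dM [sM rM] cM] _ maxM] dT sT cT idT TM v; apply: NNPP => hv.
have rMT : subring br (sumset M T).
  split; first exact: subgrp_sumset.
  move=> _ _ [m1 [t1 [hm1 ht1 ->]]] [m2 [t2 [hm2 ht2 ->]]].
  exists (br m1 m2), (br m1 t2 + br t1 (m2 + t2)).
  split; [exact: rM | | by rewrite (brDl hL) (brDr hL m1) addrA].
  apply: subgrpD => //; first exact: idT.
  by rewrite (brC hL); apply: subgrpN => //; apply: idT.
have sub := maxM (sumset M T)
  (And3 (definable_sumset dM dT) rMT (connected_sumset dM dT sM sT cM cT))
  (ex_intro _ v hv) (fun w => sumsetl sT).
by apply: TM => z hz; apply: sub; apply: sumsetr.
Qed.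

Lemma lcs_threshold M : nilpotent br N -> subgrp M -> ~ (forall z, N z -> M z) ->
  exists k, ~ (forall z, lcs br N k z -> M z) /\ forall z, lcs br N k.+1 z -> M z.
Proof.
move=> [c hc] sM NM; apply: (@ex_fail_succ_holds _ c) => // z /hc ->.
exact: subgrp0.
Qed.

Section Threshold.
Variables M T : V -> Prop.
Hypothesis rM : subring br M.
Hypothesis MT_full : forall v, sumset M T v.
Hypothesis TN : forall z, T z -> N z.
Hypothesis TN_M : forall t n, T t -> N n -> M (br t n).

Lemma br_meet_derived1 v z : M z -> N z -> M (br v z).
Proof.
move=> hzM hzN; have [sM brM] := rM; have [m [t [hm ht ->]]] := MT_full v.
by rewrite (brDl hL); apply: subgrpD => //; [apply: brM | apply: TN_M].
Qed.

Lemma br_derived1 u v : N u -> N v -> M (br u v).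
Proof.
move=> hu hv; have [sM _] := rM; have [m [t [hm ht Eu]]] := MT_full u.
have hmN : N m.
  have -> : m = u - t by rewrite Eu addrK.
  by apply: (subgrpB subgrp_derived1) => //; apply: TN.
rewrite Eu (brDl hL); apply: subgrpD => //; last exact: TN_M.
by rewrite (brC hL); apply: subgrpN => //; apply: br_meet_derived1.
Qed.

End Threshold.

Lemma frattini_br_maximal M x y : nilpotent br N -> maximal_def_conn D M ->
  frattini D y -> M (br x y).
Proof.
move=> nilN hM hy; have [[_ rM _] _ _] := hM; have [sM _] := rM.
case: (classic (forall z, N z -> M z)) => [NM | NM]; first by apply: NM; apply: derived1_br.
have [k [lcs_k_notM lcs_k1_M]] := lcs_threshold nilN sM NM.
have [dT cT sT TN idT] := lcs_derived1 k.
have MT_full := maximal_sumset_full hM dT sT cT idT lcs_k_notM.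
have TN_M t n : lcs br N k t -> N n -> M (br t n).
  move=> ht hn; rewrite (brC hL); apply: subgrpN => //.
  by apply: lcs_k1_M; apply: bracket_span_br.
have [c hc] := nilN.
apply: (@frattini_br_mem _ _ D hL N (fun z => M z /\ N z)) => //.
- exact: subgrp_derived1.
- exact: subgrpI subgrp_derived1.
- exact: derived1_br.
- by move=> v z [hzM hzN]; split; [exact: (br_meet_derived1 rM MT_full) | apply: derived1_br].
- by move=> u v hu hv; split; [exact: (br_derived1 rM MT_full) | apply: derived1_br].
- by move=> a z ha [_ hz]; exists c; apply/hc/iter_ad_lcs.
- by move=> z [].
- by move=> v; have [m [t [hm ht ->]]] := MT_full v; exists m, t; split => //; apply: TN.
Qed.

Lemma frattini_ideal : nilpotent br N -> ideal br (frattini D).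
Proof.
move=> nilN; split; last by move=> x y hy M hM; apply: frattini_br_maximal.
split=> [M [[_ [sM _] _] _ _] | x y hx hy M hM]; first exact: subgrp0.
by have [[_ [sM _] _] _ _] := hM; apply: subgrpB; [| apply: hx | apply: hy].
Qed.

End Frattini.

Theorem mainTheorem11 (V : zmodType) (br : V -> V -> V) (D : ranked_structure br) :
  lie_ring br ->
  connected D (fun _ => True) ->
  soluble br ->
  nilpotent br (derived br 1) ->
  ideal br (frattini D).
Proof. by move=> hL connV _; apply: frattini_ideal. Qed.
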